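(* Let $T$ be a tournament, let $v\in V(T)$ and let $c\in\mathbb{N}$ with $c\ge 2$. Suppose that $d^-_T(v)\ge 2^{c-1}$. Then there exist disjoint sets $A,E\subseteq V(T)$ and a vertex $a\in A$ such that: (i) $2\le |A|\le c$ and $T[A]$ is a transitive tournament with source $a$ and sink $v$; (ii) $A\setminus\{a\}$ out-dominates $V(T)\setminus(A\cup E)$; (iii) $|E|\le (1/2)^{c-2} d^-_T(v)$.
   Context: $d^-_T(v)$ is the in-degree of $v$ in $T$. A tournament is transitive if its vertices can be enumerated $v_1,\dots,v_m$ so that $v_iv_j$ is an edge iff $i<j$; then $v_1$ is its source and $v_m$ its sink. A set $A$ out-dominates a set $B$ if for every $b\in B$ there is $a'\in A$ with $a'b\in E(T)$. *)

From mathcomp Require Import all_boot.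
Set Implicit Arguments. Unset Strict Implicit. Unset Printing Implicit Defensive.

Definition tournament (V : finType) (E : rel V) : Prop :=
  (forall x, ~~ E x x) /\
  (forall x y, x != y -> (E x y && ~~ E y x) || (E y x && ~~ E x y)).

Definition indeg (V : finType) (E : rel V) (v : V) : nat := #|[set u | E u v]|.

Definition transitive_src_sink (V : finType) (E : rel V) (A : {set V}) (a b : V) : Prop :=
  exists s : seq V,
    [/\ uniq s, A =i s, head a s = a, last a s = b &
        forall i j, i < size s -> j < size s ->
          E (nth a s i) (nth a s j) = (i < j)].

Definition out_dominates (V : finType) (E : rel V) (X Y : {set V}) : Prop :=
  forall y, y \in Y -> exists2 x, x \in X & E x y.

From mathcomp Require Import all_boot zify.
Set Implicit Arguments. Unset Strict Implicit. Unset Printing Implicit Defensive.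

(* Grow a transitive chain w_k -> ... -> w_1 -> v backwards from v, keeping
   track of the set U of common in-neighbours of the chain; initially U is the
   in-neighbourhood of v.  In a tournament on at least two vertices some vertex
   has between 1 and half of the vertices as in-neighbours (a vertex of minimum
   in-degree, after discarding a possible source).  Prepending such a vertex of
   U to the chain at least halves U and keeps it nonempty.  Stop when the chain
   has c - 1 vertices or U is a singleton: then A is the chain together with
   some a in U and E is U minus a.  A vertex outside A and E is not in U, so it
   fails to beat some chain vertex, which therefore beats it. *)

Section Tournament.

Variables (V : finType) (E : rel V).
Hypothesis tourE : tournament E.

Lemma tournament_irrefl x : E x x = false.
Proof. by case: tourE => irr _; apply/negbTE. Qed.

Lemma tournament_asym x y : E x y -> ~~ E y x.
Proof.
case: tourE => _ tot Exy; have [->|nxy] := eqVneq x y; first by rewrite tournament_irrefl.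
by case/orP: (tot x y nxy) => /andP[] // _; rewrite Exy.
Qed.

Lemma tournament_total x y : x != y -> ~~ E x y -> E y x.
Proof. by case: tourE => _ tot nxy nE; case/orP: (tot x y nxy) => /andP[] //; rewrite (negbTE nE). Qed.

Lemma tournament_edge_count x y : (E x y : nat) + E y x = (x != y).
Proof.
have [->|nxy] := eqVneq x y; first by rewrite tournament_irrefl.
by case: tourE => _ tot; case/orP: (tot x y nxy) => /andP[-> /negbTE ->].
Qed.

Definition indeg_in (W : {set V}) (w : V) : nat := #|[set x in W | E x w]|.

Lemma card_set_in_sum (W : {set V}) (P : pred V) :
  #|[set x in W | P x]| = \sum_(x in W) (P x : nat).
Proof.
rewrite -sum1_card (eq_bigl (fun x => (x \in W) && P x)) => [|x]; last by rewrite inE.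
by rewrite big_mkcondr; apply: eq_bigr => x _; case: (P x).
Qed.

Lemma sum_indeg_in (W : {set V}) :
  \sum_(w in W) indeg_in W w * 2 = #|W| * (#|W| - 1).
Proof.
rewrite -big_distrl /= muln2 -addnn.
under eq_bigr => w _ do rewrite /indeg_in card_set_in_sum.
rewrite {2}exchange_big -big_split /= (eq_bigr (fun _ => #|W| - 1)) ?sum_nat_const //.
move=> w wW; rewrite -big_split /=.
under eq_bigr => x _ do rewrite tournament_edge_count.
rewrite -(card_set_in_sum W (fun x => x != w)).
have -> : [set x in W | x != w] = W :\ w by apply/setP => x; rewrite !inE andbC.
by rewrite (cardsD1 w W) wW add1n subn1.
Qed.

Lemma exists_indeg_in_le_half (W : {set V}) : 0 < #|W| ->
  exists2 w, w \in W & indeg_in W w * 2 <= #|W| - 1.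
Proof.
move=> W0; apply/exists_inP; apply: contraLR isT; rewrite negb_exists_in => /forall_inP big.
have : \sum_(w in W) #|W| <= \sum_(w in W) indeg_in W w * 2.
  by apply: leq_sum => w /big; rewrite -ltnNge; lia.
by rewrite sum_indeg_in sum_nat_const leq_mul2l; lia.
Qed.

Lemma exists_halving_vertex (W : {set V}) : 1 < #|W| ->
  exists2 w, w \in W & 0 < indeg_in W w /\ indeg_in W w * 2 <= #|W|.
Proof.
move=> W2; case: (boolP [exists z in W, indeg_in W z == 0]) => [/exists_inP[z zW /eqP/cards0_eq noinz]|].
- have cardWz : #|W :\ z| = #|W| - 1 by rewrite (cardsD1 z W) zW add1n subn1.
  have [w] := @exists_indeg_in_le_half (W :\ z) ltac:(lia).
  rewrite !inE => /andP[wz wW] small; exists w => //.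
  have Ezw : E z w.
    apply: (tournament_total wz); apply/negP => Ewz.
    by have := in_set0 w; rewrite -noinz inE wW Ewz.
  have -> : indeg_in W w = (indeg_in (W :\ z) w).+1.
    rewrite /indeg_in.
    have -> : [set x in W | E x w] = z |: [set x in W :\ z | E x w].
      by apply/setP => x; rewrite !inE; case: eqVneq => [->|] //=; rewrite zW Ezw.
    by rewrite cardsU1 !inE eqxx.
  lia.
- rewrite negb_exists_in => /forall_inP pos.
  have [w wW small] := @exists_indeg_in_le_half W ltac:(lia).
  by exists w => //; split; [rewrite lt0n; apply: pos | lia].
Qed.

Definition common_in (s : seq V) : {set V} := [set u | all (E u) s].

Definition transitive_chain (v : V) (s : seq V) : Prop :=
  uniq s /\ forall i j, i < size s -> j < size s -> E (nth v s i) (nth v s j) = (i < j).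

Lemma common_in_cons w s : common_in (w :: s) = [set x in common_in s | E x w].
Proof. by apply/setP => x; rewrite !inE /= andbC. Qed.

Lemma notin_common_in s w : w \in common_in s -> w \notin s.
Proof. by rewrite inE => /allP Hw; apply/negP => /Hw; rewrite tournament_irrefl. Qed.

Lemma transitive_chain_cons v s w :
  transitive_chain v s -> w \in common_in s -> transitive_chain v (w :: s).
Proof.
move=> [us Es] wU; split; first by rewrite /= us notin_common_in.
move: (wU); rewrite inE => /allP beats.
case=> [|i] [|j] //= ltis ltjs.
- exact: tournament_irrefl.
- exact/beats/mem_nth.
- exact/negbTE/tournament_asym/beats/mem_nth.
- exact: Es.
Qed.

Definition dominating_transitive_split (v : V) (c : nat) : Prop :=
  exists (A Ex : {set V}) (a : V),
    [/\ [disjoint A & Ex], a \in A,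
        2 <= #|A| <= c /\ transitive_src_sink E A a v,
        out_dominates E (A :\ a) (~: (A :|: Ex)) &
        #|Ex| * 2 ^ (c - 2) <= indeg E v].

Lemma split_of_chain v c s a :
  transitive_chain v s -> last v s = v -> 0 < size s < c ->
  a \in common_in s -> #|common_in s :\ a| * 2 ^ (c - 2) <= indeg E v ->
  dominating_transitive_split v c.
Proof.
move=> chs lasts /andP[s0 sc] aU bound.
have [uas Eas] := transitive_chain_cons chs aU.
have ans := notin_common_in aU.
exists [set x in a :: s], (common_in s :\ a), a; split => //.
- rewrite disjoint_subset; apply/subsetP => x; rewrite !inE => /orP[/eqP->|xs].
    by rewrite eqxx.
  by apply/nandP; right; apply/allPn; exists x; rewrite // tournament_irrefl.
- by rewrite inE mem_head.
- split; first by rewrite cardsE (card_uniqP uas) /=; lia.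
  exists (a :: s); split => // [x||i j ltis ltjs]; first by rewrite !inE.
  + by rewrite -lasts; case: (s) s0.
  + by rewrite (set_nth_default v a ltis) (set_nth_default v a ltjs) Eas.
- move=> y; rewrite !inE negb_or => /andP[yA].
  have ya : y != a by apply: contra yA => ->.
  rewrite ya /= => /allPn[b bs nEyb]; exists b.
    by rewrite !inE bs orbT andbT; apply: contra ans => /eqP<-.
  by apply: (tournament_total _ nEyb); apply: contra yA => /eqP->; rewrite bs orbT.
Qed.

Lemma split_of_growing_chain v c n s :
  size s + n = c - 1 -> transitive_chain v s -> last v s = v -> 0 < size s ->
  0 < #|common_in s| -> #|common_in s| * 2 ^ (size s - 1) <= indeg E v ->
  dominating_transitive_split v c.
Proof.
elim: n s => [|n IH] s sizes chs lasts s0 U0 bound;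
  have [a aU] : exists a, a \in common_in s by apply/set0Pn; rewrite -card_gt0.
  apply: (split_of_chain chs lasts _ aU); first by lia.
  rewrite (_ : c - 2 = size s - 1); last by lia.
  by apply: leq_trans bound; rewrite leq_mul2r (cardsD1 a (common_in s)) aU leqnSn orbT.
have [U1|U'1] := eqVneq #|common_in s| 1.
  apply: (split_of_chain chs lasts _ aU); first by lia.
  suff -> : #|common_in s :\ a| = 0 by [].
  by move: U1; rewrite (cardsD1 a (common_in s)) aU; lia.
have U2 : 1 < #|common_in s| by lia.
have [w wU [] ] := exists_halving_vertex U2; rewrite /indeg_in -common_in_cons => U'0 halved.
apply: (IH (w :: s)) => //=; first by lia.
- exact: transitive_chain_cons.
- by rewrite -lasts; case: (s) s0.
- rewrite subn1 (_ : size s = (size s - 1).+1) ?expnS ?mulnA; last by lia.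
  by apply: leq_trans bound; rewrite leq_mul2r halved orbT.
Qed.

End Tournament.

Theorem lemma2p3 (V : finType) (E : rel V) (v : V) (c : nat) :
  tournament E -> 2 <= c -> 2 ^ (c - 1) <= indeg E v ->
  exists (A Ex : {set V}) (a : V),
    [/\ [disjoint A & Ex], a \in A,
        2 <= #|A| <= c /\ transitive_src_sink E A a v,
        out_dominates E (A :\ a) (~: (A :|: Ex)) &
        #|Ex| * 2 ^ (c - 2) <= indeg E v].
Proof.
move=> tourE c2 degv.
have Uv : common_in E [:: v] = [set u | E u v].
  by apply/setP => u; rewrite !inE /= andbT.
apply: (@split_of_growing_chain _ E tourE v c (c - 2) [:: v]) => //=.
- lia.
- by split => //= [[|i]] [|j] //= _ _; apply: tournament_irrefl.
- by rewrite Uv -/(indeg E v); apply: leq_trans degv; rewrite expn_gt0.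
- by rewrite Uv -/(indeg E v) muln1.
Qed.
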